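(* Let $G=(V,E)$ be a classical graph with vertex set $V=[n]$ and let $f\colon V \to \mathbb{C}^d$ be an orthogonal representation of $G$ in locally general position. Let $\phi\colon M_n\to M_d$ be given by $\phi(X) = \sum_{i=1}^n |f(i)\rangle\langle e_i| X |e_i\rangle\langle f(i)|$ for all $X\in M_n$ (an orthogonal representation of $\mathcal{S}_G=\operatorname{span}\{|e_i\rangle\langle e_j| : i=j\text{ or } i \text{ adjacent to } j\}$). Then $\phi$ is in locally general position.
   Context: $(|e_k\rangle)$ is the standard basis of $\mathbb{C}^n$. A classical orthogonal representation of $G$ is a map $f\colon V\to\mathbb{C}^d$ such that $f(i)\perp f(j)$ whenever $i\neq j$ and $i,j$ are not adjacent; it is in locally general position if for each fixed vertex, the vectors $f(j)$ representing the vertices $j$ nonadjacent to it are linearly independent. Elements $a,b$ of a $C^*$-algebra are orthogonal if $ab=ba=a^*b=ab^*=0$. For a quantum graph $\mathcal{S}\subseteq M_n$ (a subspace closed under adjoints containing $I_n$), a completely positive map $\phi\colon M_n\to M_d$ is an orthogonal representation of $\mathcal{S}$ if $\phi(A)\perp\phi(B)$ for all $A,B\in M_n$ with $A\mathcal{S}B=B\mathcal{S}A=A^*\mathcal{S}B=A\mathcal{S}B^*=\{0\}$. Such $\phi$ is in locally general position if for every nonzero projection $Q\in M_n$ and every projection $P\in M_n$ with $Q\mathcal{S}P=\{0\}$ one has $\operatorname{rank}(\phi(P))\ge\operatorname{rank}(P)$. *)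

(* Complex scalars: an arbitrary numClosedFieldType C
   (e.g. C = complex numbers); conjugation is Num.conj (notation x^* ). *)
From HB Require Import structures.
From mathcomp Require Import all_boot all_order all_algebra.
Set Implicit Arguments. Unset Strict Implicit. Unset Printing Implicit Defensive.
Import Order.TTheory GRing.Theory Num.Theory.
Local Open Scope ring_scope.

Section Defs.
Variable C : numClosedFieldType.

Definition adjmx m k (A : 'M[C]_(m, k)) : 'M[C]_(k, m) := (map_mx Num.conj A)^T.

Definition ket n (i : 'I_n) : 'cV[C]_n := delta_mx i 0.
Definition bra n (i : 'I_n) : 'rV[C]_n := delta_mx 0 i.

Definition innerp d (u v : 'cV[C]_d) : C := (adjmx u *m v) 0 0.

Definition simple_graph n (adj : rel 'I_n) : Prop :=
  (forall i j, adj i j = adj j i) /\ (forall i, ~~ adj i i).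

Definition orth_rep n d (adj : rel 'I_n) (f : 'I_n -> 'cV[C]_d) : Prop :=
  forall i j, i != j -> ~~ adj i j -> innerp (f i) (f j) = 0.

Definition loc_gen_pos n d (adj : rel 'I_n) (f : 'I_n -> 'cV[C]_d) : Prop :=
  forall i : 'I_n, forall c : 'I_n -> C,
    \sum_(j | (j != i) && ~~ adj i j) c j *: f j = 0 ->
    forall j, j != i -> ~~ adj i j -> c j = 0.

(* A quantum graph in M_n is represented as a (row) subspace of vectorized
   matrices: A belongs to S iff (mxvec A <= S)%MS. *)
Definition in_qg n (S : 'M[C]_(n * n)) (A : 'M[C]_n) : bool := (mxvec A <= S)%MS.

Definition S_G n (adj : rel 'I_n) : 'M[C]_(n * n) :=
  (\sum_(i : 'I_n) \sum_(j : 'I_n | (i == j) || adj i j)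
      <<mxvec (ket i *m bra j)>>)%MS.

Definition is_proj n (P : 'M[C]_n) : Prop := P *m P = P /\ adjmx P = P.

Definition qloc_gen_pos n d (S : 'M[C]_(n * n)) (phi : 'M[C]_n -> 'M[C]_d) : Prop :=
  forall Q P : 'M[C]_n, is_proj Q -> Q != 0 -> is_proj P ->
    (forall A, in_qg S A -> Q *m A *m P = 0) ->
    (\rank P <= \rank (phi P))%N.

Definition phi_of n d (f : 'I_n -> 'cV[C]_d) (X : 'M[C]_n) : 'M[C]_d :=
  \sum_(i < n) f i *m bra i *m X *m ket i *m adjmx (f i).

End Defs.

(** Since [Q <> 0], some
    entry [Q k i0] is nonzero; as [|e_i0><e_j|] lies in [S_G] for [j = i0] or
    [j] adjacent to [i0], the condition [Q S_G P = 0] forces [P j j = 0] for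
    those [j].  Writing [M] for the matrix with columns [f i] and [D] for the
    diagonal of [P], we have [phi P = M D adj(M)], and
    [rank P <= rank D <= rank (M D) <= rank (M D adj(M))]: the first inequality
    because a column of the projection [P] vanishes with its diagonal entry,
    the second because [D] is supported on the non-neighbours of [i0], whose
    [f]-vectors are independent, the third because [D] is positive. *)
From mathcomp Require Import all_boot all_order all_algebra.
From mathcomp Require Import zify ring.
Set Implicit Arguments. Unset Strict Implicit. Unset Printing Implicit Defensive.
Import GRing.Theory Num.Theory.
Local Open Scope ring_scope.

Section RankByKernel.
Variable F : fieldType.

Lemma mxrank_leq_lker m p q (A : 'M[F]_(m, p)) (B : 'M[F]_(m, q)) :
  (forall c : 'rV_m, c *m A = 0 -> c *m B = 0) -> (\rank B <= \rank A)%N.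
Proof.
move=> kerAB.
have sub_ker : (kermx A <= kermx B)%MS.
  apply/sub_kermxP/row_matrixP => i; rewrite row_mul row0.
  by apply: kerAB; rewrite -row_mul mulmx_ker row0.
have := mxrankS sub_ker; rewrite !mxrank_ker.
have := rank_leq_row A; have := rank_leq_row B; lia.
Qed.

Lemma mxrank_leq_rker m p q (A : 'M[F]_(p, m)) (B : 'M[F]_(q, m)) :
  (forall v : 'cV_m, A *m v = 0 -> B *m v = 0) -> (\rank B <= \rank A)%N.
Proof.
move=> kerAB; rewrite -mxrank_tr -[\rank A]mxrank_tr.
apply: mxrank_leq_lker => c /(congr1 trmx); rewrite trmx_mul trmxK trmx0.
by move/kerAB/(congr1 trmx); rewrite trmx_mul trmxK trmx0.
Qed.

End RankByKernel.

Section Adjoint.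
Variable C : numClosedFieldType.

Lemma adjmx_mul m p q (A : 'M[C]_(m, p)) (B : 'M[C]_(p, q)) :
  adjmx (A *m B) = adjmx B *m adjmx A.
Proof. by rewrite /adjmx map_mxM trmx_mul. Qed.

Lemma adjmx_mulmx_diag m n (A : 'M[C]_(m, n)) i :
  (adjmx A *m A) i i = \sum_k `|A k i| ^+ 2.
Proof. by rewrite !mxE; apply: eq_bigr => k _; rewrite !mxE normCK mulrC. Qed.

Lemma mulmx_diag_adjmx n (u : 'rV[C]_n) (w : 'rV[C]_n) :
  (u *m diag_mx w *m adjmx u) 0 0 = \sum_i w 0 i * `|u 0 i| ^+ 2.
Proof.
rewrite mul_mx_diag !mxE; apply: eq_bigr => i _.
by rewrite !mxE normCK; ring.
Qed.

Lemma mxrank_mul_diag_adjmx m n (M : 'M[C]_(m, n)) (w : 'rV[C]_n) :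
  (forall i, 0 <= w 0 i) ->
  (\rank (M *m diag_mx w) <= \rank (M *m diag_mx w *m adjmx M))%N.
Proof.
move=> w_ge0; apply: mxrank_leq_lker => c; rewrite !mulmxA; set u := c *m M.
move=> /(congr1 (mulmx^~ (adjmx c))).
rewrite mul0mx -[_ *m adjmx c]mulmxA -adjmx_mul.
move=> /matrixP/(_ 0 0); rewrite mulmx_diag_adjmx mxE => /psumr_eq0P sum0.
apply/rowP => i; rewrite mul_mx_diag [LHS]mxE [RHS]mxE.
have /eqP := sum0 (fun i _ => mulr_ge0 (w_ge0 i) (exprn_ge0 _ (normr_ge0 _))) i isT.
by rewrite mulf_eq0 sqrf_eq0 normr_eq0 => /orP[] /eqP ->; rewrite ?mulr0 ?mul0r.
Qed.

End Adjoint.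

Section Projection.
Variables (C : numClosedFieldType) (n : nat) (P : 'M[C]_n).
Hypothesis projP : is_proj P.

Lemma proj_diagE i : P i i = \sum_k `|P k i| ^+ 2.
Proof. by case: projP => PP Padj; rewrite -adjmx_mulmx_diag Padj PP. Qed.

Lemma proj_diag_ge0 i : 0 <= P i i.
Proof. by rewrite proj_diagE sumr_ge0 // => k _; rewrite exprn_ge0. Qed.

Lemma proj_diag_eq0 i : P i i = 0 -> forall k, P k i = 0.
Proof.
rewrite proj_diagE => /psumr_eq0P sum0 k.
by apply/eqP; rewrite -normr_eq0 -sqrf_eq0 sum0 // => j _; rewrite exprn_ge0.
Qed.

Lemma mxrank_proj_diag : (\rank P <= \rank (diag_mx (\row_i P i i)))%N.
Proof.
apply: mxrank_leq_rker => v /matrixP Dv; apply/matrixP => k l.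
rewrite !mxE ord1 big1 // => i _.
have [Pii0 | Pii] := eqVneq (P i i) 0; first by rewrite proj_diag_eq0 ?mul0r.
move: (Dv i 0); rewrite mul_diag_mx !mxE => /eqP.
by rewrite mulf_eq0 (negPf Pii) => /eqP ->; rewrite mulr0.
Qed.

End Projection.

Section Representation.
Variables (C : numClosedFieldType) (n d : nat).


Definition vecs_mx (f : 'I_n -> 'cV[C]_d) : 'M[C]_(d, n) := \matrix_(a, i) f i a 0.

Lemma bra_mulmx_ket (X : 'M[C]_n) i j : bra C i *m X *m ket C j = (X i j)%:M.
Proof. by rewrite /bra /ket -rowE -colE; apply/rowP => k; rewrite ord1 !mxE eqxx. Qed.

Lemma phi_ofE (f : 'I_n -> 'cV[C]_d) X :
  phi_of f X = vecs_mx f *m diag_mx (\row_i X i i) *m adjmx (vecs_mx f).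
Proof.
apply/matrixP => a b; rewrite summxE mul_mx_diag !mxE; apply: eq_bigr => i _.
rewrite -[f i *m _ *m X]mulmxA -[f i *m _ *m ket C i]mulmxA bra_mulmx_ket.
by rewrite mul_mx_scalar -scalemxAl !mxE big_ord1 !mxE; ring.
Qed.

Lemma vecs_mx_mul (f : 'I_n -> 'cV[C]_d) (v : 'cV[C]_n) :
  vecs_mx f *m v = \sum_j v j 0 *: f j.
Proof.
by apply/colP => a; rewrite !mxE summxE; apply: eq_bigr => j _; rewrite !mxE mulrC.
Qed.

Lemma mxrank_diag_leq_vecs_mul (adj : rel 'I_n) (f : 'I_n -> 'cV[C]_d) i0
    (w : 'rV[C]_n) :
  loc_gen_pos adj f -> (forall j, (i0 == j) || adj i0 j -> w 0 j = 0) ->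
  (\rank (diag_mx w) <= \rank (vecs_mx f *m diag_mx w))%N.
Proof.
move=> lgp w0; apply: mxrank_leq_rker => v; rewrite -mulmxA vecs_mx_mul => sum0.
pose c j := (diag_mx w *m v) j 0.
have c0 j : (i0 == j) || adj i0 j -> c j = 0.
  by move=> i0j; rewrite /c mul_diag_mx mxE w0 ?mul0r.
have sumN : \sum_(j | (j != i0) && ~~ adj i0 j) c j *: f j = 0.
  rewrite -[RHS]sum0 [RHS](bigID [pred j | (j != i0) && ~~ adj i0 j]) /=.
  rewrite [X in _ = _ + X]big1 ?addr0 // => j.
  by rewrite negb_and !negbK eq_sym => /c0; rewrite /c => ->; rewrite scale0r.
apply/colP => j; rewrite [RHS]mxE -/(c j).
have [/andP[ji0 nadj] | ] := boolP ((j != i0) && ~~ adj i0 j).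
  exact: lgp sumN j ji0 nadj.
by rewrite negb_and !negbK eq_sym => /c0.
Qed.

End Representation.

Section QuantumGraph.
Variables (C : numClosedFieldType) (n : nat) (adj : rel 'I_n).

Lemma S_G_ket_bra i j :
  (i == j) || adj i j -> in_qg (S_G C adj) (ket C i *m bra C j).
Proof.
move=> ij; rewrite /in_qg /S_G; apply: (sumsmx_sup i) => //.
by apply: (sumsmx_sup j) => //; rewrite genmxE.
Qed.

Lemma mulmx_ket_bra_entry m p (A : 'M[C]_(m, n)) (B : 'M[C]_(n, p)) i j k l :
  (A *m (ket C i *m bra C j) *m B) k l = A k i * B j l.
Proof. by rewrite mulmxA /ket /bra -colE -mulmxA -rowE !mxE big_ord1 !mxE. Qed.

Lemma S_G_annihilator_diag (Q P : 'M[C]_n) k i0 j :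
  (forall A, in_qg (S_G C adj) A -> Q *m A *m P = 0) -> Q k i0 != 0 ->
  (i0 == j) || adj i0 j -> P j j = 0.
Proof.
move=> QSP Qki0 i0j; move/matrixP: (QSP _ (S_G_ket_bra i0j)) => /(_ k j).
by rewrite mulmx_ket_bra_entry mxE => /eqP; rewrite mulf_eq0 (negPf Qki0) => /eqP.
Qed.

End QuantumGraph.

Theorem proposition5p8 (C : numClosedFieldType) (n d : nat) (adj : rel 'I_n)
  (f : 'I_n -> 'cV[C]_d) :
  simple_graph adj -> orth_rep adj f -> loc_gen_pos adj f ->
  qloc_gen_pos (S_G C adj) (phi_of f).
Proof.
move=> _ _ lgp Q P _ /matrix0Pn[k [i0 Qki0]] projP QSP.
rewrite phi_ofE; apply: leq_trans (mxrank_proj_diag projP) _.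
apply: leq_trans (mxrank_diag_leq_vecs_mul (i0 := i0) lgp _) _.
  by move=> j i0j; rewrite mxE; exact: S_G_annihilator_diag QSP Qki0 i0j.
by apply: mxrank_mul_diag_adjmx => i; rewrite mxE (proj_diag_ge0 projP).
Qed.
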